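(* Let $f_0,g_1,\dots,g_q:\mathbb{R}^n\to\mathbb{R}$ with $f_0$ continuous and each $g_i$ lower semicontinuous. For $\nu\in\mathbb{N}$ let $f_0^\nu,g_1^\nu,\dots,g_q^\nu:\mathbb{R}^n\to\mathbb{R}$ and $\alpha^\nu\ge0$ satisfy $\sup_{x\in\mathbb{R}^n}|f_0^\nu(x)-f_0(x)|\le\alpha^\nu$ and $\sup_{x\in\mathbb{R}^n}\max_{i=1,\dots,q}|g_i^\nu(x)-g_i(x)|\le\alpha^\nu$, and let $\theta^\nu>0$. Define $f,f^\nu:\mathbb{R}^n\times\mathbb{R}^q\to(-\infty,\infty]$ by $$f(x,y)=f_0(x)+\sum_{i=1}^q\iota_{\{0\}}(y_i)+\sum_{i=1}^q\iota_{(-\infty,0]}\big(g_i(x)-y_i\big),$$ $$f^\nu(x,y)=f_0^\nu(x)+\sum_{i=1}^q\phi^\nu(y_i)+\sum_{i=1}^q\iota_{(-\infty,0]}\big(g_i^\nu(x)-y_i\big),\quad \phi^\nu(\beta)=\theta^\nu\beta \text{ if }\beta\ge0,\ \phi^\nu(\beta)=\infty\text{ otherwise}.$$ If $\theta^\nu\to\infty$ and $\theta^\nu\alpha^\nu\to0$, then $f^\nu$ epi-converges to $f$.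
   Context: For a set $C$, $\iota_C(u)=0$ if $u\in C$ and $\iota_C(u)=\infty$ otherwise. A sequence $f^\nu$ epi-converges to $f$ if the epigraphs $\{(z,\alpha)\mid f^\nu(z)\le\alpha\}$ set-converge in the Painlevé–Kuratowski sense to $\{(z,\alpha)\mid f(z)\le\alpha\}$; equivalently, (i) for every $z^\nu\to z$, $\liminf f^\nu(z^\nu)\ge f(z)$, and (ii) for every $z$ there exists $z^\nu\to z$ with $\limsup f^\nu(z^\nu)\le f(z)$. *)

From Stdlib Require Import Reals ClassicalEpsilon.
From mathcomp Require Import ssreflect ssrfun ssrbool eqtype ssrnat seq fintype.
Open Scope R_scope.

Definition vec (n : nat) := 'I_n -> R.

(* Convergence of sequences in R^n (coordinatewise = Euclidean). *)
Definition vcv {n : nat} (xs : nat -> vec n) (x : vec n) : Prop :=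
  forall i : 'I_n, Un_cv (fun k => xs k i) (x i).

Definition seq_continuous {n : nat} (h : vec n -> R) : Prop :=
  forall (xs : nat -> vec n) (x : vec n), vcv xs x -> Un_cv (fun k => h (xs k)) (h x).

Definition lsc {n : nat} (h : vec n -> R) : Prop :=
  forall (xs : nat -> vec n) (x : vec n), vcv xs x ->
    forall eps, eps > 0 -> exists N, forall k, (k >= N)%nat -> h (xs k) > h x - eps.

(* Extended reals (-oo, +oo]: None stands for +oo. *)
Definition ER := option R.
Definition eadd (a b : ER) : ER :=
  match a, b with Some x, Some y => Some (x + y) | _, _ => None end.
Definition esum {q : nat} (F : 'I_q -> ER) : ER :=
  foldr (fun i acc => eadd (F i) acc) (Some 0) (enum 'I_q).

Definition iota (C : R -> Prop) (u : R) : ER :=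
  match excluded_middle_informative (C u) with left _ => Some 0 | right _ => None end.

Definition phi (theta beta : R) : ER :=
  match Rle_dec 0 beta with left _ => Some (theta * beta) | right _ => None end.

Definition f_lim {n q : nat} (f0 : vec n -> R) (g : 'I_q -> vec n -> R)
  (x : vec n) (y : vec q) : ER :=
  eadd (eadd (Some (f0 x)) (esum (fun i => iota (fun u => u = 0) (y i))))
       (esum (fun i => iota (fun u => u <= 0) (g i x - y i))).

Definition f_nu {n q : nat} (theta : R) (f0n : vec n -> R) (gn : 'I_q -> vec n -> R)
  (x : vec n) (y : vec q) : ER :=
  eadd (eadd (Some (f0n x)) (esum (fun i => phi theta (y i))))
       (esum (fun i => iota (fun u => u <= 0) (gn i x - y i))).

Definition point (n q : nat) := (vec n * vec q * R)%type.

Definition epi {n q : nat} (F : vec n -> vec q -> ER) (p : point n q) : Prop :=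
  match p with (x, y, a) =>
    match F x y with Some v => v <= a | None => False end end.

Definition pcv {n q : nat} (ps : nat -> point n q) (p : point n q) : Prop :=
  vcv (fun k => fst (fst (ps k))) (fst (fst p)) /\
  vcv (fun k => snd (fst (ps k))) (snd (fst p)) /\
  Un_cv (fun k => snd (ps k)) (snd p).

Definition inner_limit {n q : nat} (C : nat -> point n q -> Prop) (p : point n q) : Prop :=
  exists N0 (ps : nat -> point n q),
    (forall k, (k >= N0)%nat -> C k (ps k)) /\ pcv ps p.

Definition outer_limit {n q : nat} (C : nat -> point n q -> Prop) (p : point n q) : Prop :=
  exists (N : nat -> nat) (ps : nat -> point n q),
    (forall k, (N k < N (S k))%nat) /\ (forall k, C (N k) (ps k)) /\ pcv ps p.

Definition PK_converges {n q : nat} (C : nat -> point n q -> Prop) (D : point n q -> Prop) : Prop :=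
  (forall p, outer_limit C p -> D p) /\ (forall p, D p -> inner_limit C p).

Definition epi_converges {n q : nat} (Fs : nat -> vec n -> vec q -> ER)
  (F : vec n -> vec q -> ER) : Prop :=
  PK_converges (fun k => epi (Fs k)) (epi F).

(* Along any sequence in the epigraphs of f^nu, the uniform bounds give
   f0(x^nu) - alpha^nu <= a^nu and theta^nu y^nu_i <= a^nu - f0(x^nu) + alpha^nu,
   so y^nu -> 0 because theta^nu -> oo; continuity of f0 and lower
   semicontinuity of g_i then put the limit in the epigraph of f.
   Conversely (x, 0, a) in epi f is recovered by
   (x, alpha^nu, a + alpha^nu + q theta^nu alpha^nu): raising every y_i to
   alpha^nu absorbs the perturbation of g_i at the cost q theta^nu alpha^nu -> 0. *)
From Pilot Require Import Defs.
From Stdlib Require Import Reals Lra Lia ClassicalEpsilon.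
From mathcomp Require Import ssreflect ssrfun ssrbool eqtype ssrnat seq fintype.
Open Scope R_scope.

Lemma foldr_eadd_Some_le {q} {F : 'I_q -> ER} {l : seq 'I_q} {s} :
  (forall i v, F i = Some v -> 0 <= v) ->
  foldr (fun i acc => eadd (F i) acc) (Some 0) l = Some s ->
  0 <= s /\ forall i, i \in l -> exists2 v, F i = Some v & v <= s.
Proof.
move=> F_ge0; elim: l s => [|j l IH] s /=; first by case=> <-; split; [lra|].
case Fj: (F j) => [vj|] //; case Fl: (foldr _ _ l) => [sl|] //= [<-].
have [sl_ge0 Fl_le] := IH sl Fl; have vj_ge0 := F_ge0 _ _ Fj.
split=> [|i]; first lra.
rewrite in_cons => /orP [/eqP -> | il]; first by exists vj => //; lra.
by have [v Fi v_le] := Fl_le i il; exists v => //; lra.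
Qed.

Lemma esum_Some_le {q} {F : 'I_q -> ER} {s} :
  (forall i v, F i = Some v -> 0 <= v) -> esum F = Some s ->
  0 <= s /\ forall i, exists2 v, F i = Some v & v <= s.
Proof.
move=> F_ge0 /(foldr_eadd_Some_le F_ge0) [s_ge0 F_le]; split=> // i.
by apply: F_le; rewrite mem_enum.
Qed.

Lemma esum_const {q} {F : 'I_q -> ER} c :
  (forall i, F i = Some c) -> esum F = Some (INR q * c).
Proof.
move=> Fc; rewrite /esum -[in INR q](size_enum_ord q).
elim: (enum 'I_q) => [|j l IH] /=; first by rewrite Rmult_0_l.
rewrite Fc IH /= -/(INR (size l).+1); move: (size l) => m.
by rewrite S_INR; congr Some; ring.
Qed.

Lemma iota_Some C u v : Defs.iota C u = Some v -> C u /\ v = 0.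
Proof. by rewrite /Defs.iota; case: excluded_middle_informative => // Cu [<-]. Qed.

Lemma iota_in C u : C u -> Defs.iota C u = Some 0.
Proof. by rewrite /Defs.iota; case: excluded_middle_informative. Qed.

Lemma phi_Some th b v : phi th b = Some v -> 0 <= b /\ v = th * b.
Proof. by rewrite /phi; case: Rle_dec => // b_ge0 [<-]. Qed.

Lemma phi_ge0 th b : 0 <= b -> phi th b = Some (th * b).
Proof. by rewrite /phi; case: Rle_dec. Qed.

Lemma epi_f_limP n q f0 (g : 'I_q -> vec n -> R) x y a :
  epi (f_lim f0 g) (x, y, a) <->
  [/\ forall i, y i = 0, forall i, g i x <= 0 & f0 x <= a].
Proof.
have iota_ge0 C u v : Defs.iota C u = Some v -> 0 <= v.
  by move=> /iota_Some [_ ->]; lra.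
split.
- rewrite /epi /f_lim.
  case Hs: (esum _) => [s|] //; case Ht: (esum _) => [t|] //= le_a.
  have y0 i : y i = 0.
    by have [_ /(_ i) [v /iota_Some []]] := esum_Some_le (fun i => iota_ge0 _ _) Hs.
  have gx_le i : g i x - y i <= 0.
    by have [_ /(_ i) [v /iota_Some []]] := esum_Some_le (fun i => iota_ge0 _ _) Ht.
  rewrite (esum_const 0) in Hs; last by move=> i; apply: iota_in.
  rewrite (esum_const 0) in Ht; last by move=> i; apply: iota_in.
  case: Hs Ht le_a => <- [<-]; split=> // [i|]; last lra.
  by have := gx_le i; rewrite y0; lra.
- case=> y0 gx_le f0x_le; rewrite /epi /f_lim.
  rewrite (esum_const 0); last by move=> i; apply: iota_in.
  rewrite (esum_const 0) /=; first lra.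
  by move=> i; apply: iota_in; rewrite y0; have := gx_le i; lra.
Qed.

Lemma epi_f_nu_inv {n q th f0n} {gn : 'I_q -> vec n -> R} {x y a} :
  0 < th -> epi (f_nu th f0n gn) (x, y, a) ->
  (forall i, [/\ 0 <= y i, gn i x <= y i & th * y i <= a - f0n x]) /\ f0n x <= a.
Proof.
move=> th_gt0; rewrite /epi /f_nu.
case Hs: (esum _) => [s|] //; case Ht: (esum _) => [t|] //= le_a.
have phi_val_ge0 i v : phi th (y i) = Some v -> 0 <= v.
  by move=> /phi_Some [y_ge0 ->]; nra.
have iota_ge0 i v : Defs.iota (fun u => u <= 0) (gn i x - y i) = Some v -> 0 <= v.
  by move=> /iota_Some [_ ->]; lra.
have [s_ge0 Fs_le] := esum_Some_le phi_val_ge0 Hs.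
have [t_ge0 Ft_le] := esum_Some_le iota_ge0 Ht.
split=> [i|]; last lra.
have [v /phi_Some [y_ge0 ->] v_le] := Fs_le i.
have [w /iota_Some [gn_le _] _] := Ft_le i.
by split=> //; lra.
Qed.

Lemma epi_f_nu_const n q th f0n (gn : 'I_q -> vec n -> R) x c a :
  0 <= c -> (forall i, gn i x <= c) -> f0n x + INR q * (th * c) <= a ->
  epi (f_nu th f0n gn) (x, fun _ => c, a).
Proof.
move=> c_ge0 gn_le le_a; rewrite /epi /f_nu.
rewrite (esum_const (th * c)); last by move=> i; apply: phi_ge0.
rewrite (esum_const 0) /=; first lra.
by move=> i; apply: iota_in; have := gn_le i; lra.
Qed.

Lemma Rabs_sub_le_bounds {u v e} : Rabs (u - v) <= e -> v - e <= u <= v + e.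
Proof. by rewrite /Rabs; case: Rcase_abs; lra. Qed.

Lemma Un_cv_const c : Un_cv (fun _ => c) c.
Proof. by move=> eps eps_gt0; exists 0%nat => k _; rewrite /R_dist Rminus_diag Rabs_R0. Qed.

Lemma Rle_cv_lim_eventually {u v l m} K :
  (forall k, (k >= K)%coq_nat -> u k <= v k) -> Un_cv u l -> Un_cv v m -> l <= m.
Proof.
move=> le_uv cv_u cv_v.
apply: (Rle_cv_lim _ (CV_shift' _ K _ cv_u) (CV_shift' _ K _ cv_v)).
by move=> k; apply: le_uv; lia.
Qed.

Lemma lsc_le_cv_lim {n} {h : vec n -> R} {xs x v m} :
  lsc h -> vcv xs x -> (forall k, h (xs k) <= v k) -> Un_cv v m -> h x <= m.
Proof.
move=> lsc_h cv_x le_v cv_v; apply: Rle_plus_epsilon => eps eps_gt0.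
have [K hK] := lsc_h _ _ cv_x eps eps_gt0.
have : h x - eps <= m.
  apply: (Rle_cv_lim_eventually K _ (Un_cv_const _) cv_v).
  by move=> k /leP /hK; have := le_v k; lra.
lra.
Qed.

Lemma strictly_increasing_ge {N : nat -> nat} :
  (forall k, (N k < N k.+1)%nat) -> forall k, (k <= N k)%coq_nat.
Proof. by move=> N_lt; elim=> [|k IH]; [lia | have /ltP := N_lt k; lia]. Qed.

Lemma Un_cv_subseq {u l} {N : nat -> nat} :
  (forall k, (N k < N k.+1)%nat) -> Un_cv u l -> Un_cv (fun k => u (N k)) l.
Proof.
move=> N_lt cv_u eps eps_gt0; have [K hK] := cv_u eps eps_gt0.
exists K => k k_ge; apply: hK; have := strictly_increasing_ge N_lt k; lia.
Qed.

Lemma cv_infty_subseq {u} {N : nat -> nat} :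
  (forall k, (N k < N k.+1)%nat) -> cv_infty u -> cv_infty (fun k => u (N k)).
Proof.
move=> N_lt u_infty M; have [K hK] := u_infty M.
exists K => k k_ge; apply: hK; have := strictly_increasing_ge N_lt k; lia.
Qed.

Lemma cv0_of_cv_infty_mul {theta alpha : nat -> R} :
  (forall k, 0 <= alpha k) -> cv_infty theta ->
  Un_cv (fun k => theta k * alpha k) 0 -> Un_cv alpha 0.
Proof.
move=> alpha_ge0 theta_infty cv_prod eps eps_gt0.
have [K1 hK1] := theta_infty 1; have [K2 hK2] := cv_prod eps eps_gt0.
exists (Nat.max K1 K2) => k k_ge.
have theta_gt1 := hK1 k ltac:(lia); have alpha_k_ge0 := alpha_ge0 k.
have := hK2 k ltac:(lia); rewrite /R_dist !Rminus_0_r !Rabs_pos_eq //; nra.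
Qed.

Section OuterLimit.

Context {n q : nat} {f0 : vec n -> R} {g : 'I_q -> vec n -> R}.
Context {theta alpha : nat -> R} {f0s : nat -> vec n -> R} {gs : nat -> 'I_q -> vec n -> R}.
Hypothesis f0_cont : seq_continuous f0.
Hypothesis g_lsc : forall i, lsc (g i).
Hypothesis theta_gt0 : forall k, 0 < theta k.
Hypothesis theta_infty : cv_infty theta.
Hypothesis alpha_cv0 : Un_cv alpha 0.
Hypothesis f0s_ge : forall k x, f0 x - alpha k <= f0s k x.
Hypothesis gs_ge : forall k i x, g i x - alpha k <= gs k i x.

Context {xs : nat -> vec n} {ys : nat -> vec q} {rs : nat -> R}.
Context {x : vec n} {y : vec q} {a : R}.
Hypothesis epi_k : forall k, epi (f_nu (theta k) (f0s k) (gs k)) (xs k, ys k, rs k).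
Hypothesis cv_x : vcv xs x.
Hypothesis cv_y : vcv ys y.
Hypothesis cv_r : Un_cv rs a.

Let bounds k := epi_f_nu_inv (theta_gt0 k) (epi_k k).

Let cv_f0_minus_alpha : Un_cv (fun k => f0 (xs k) - alpha k) (f0 x).
Proof. by rewrite -[f0 x]Rminus_0_r; apply: CV_minus => //; apply: f0_cont. Qed.

Lemma outer_limit_f0_le : f0 x <= a.
Proof.
apply: (Rle_cv_lim _ cv_f0_minus_alpha cv_r) => k.
by have [_ ?] := bounds k; have := f0s_ge k (xs k); lra.
Qed.

(* theta_k y_k <= r_k - f0(x_k) + alpha_k, whose right-hand side converges *)
Lemma outer_limit_y0 i : y i = 0.
Proof.
apply: Rle_antisym.
- have cv_bound : Un_cv (fun k => (rs k - (f0 (xs k) - alpha k)) * / theta k) 0.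
    by rewrite -(Rmult_0_r (a - f0 x)); apply: CV_mult;
      [apply: CV_minus | apply: cv_infty_cv_0].
  apply: (Rle_cv_lim _ (cv_y i) cv_bound) => k.
  have [/(_ i) [_ _ th_y] _] := bounds k; have := f0s_ge k (xs k).
  have := theta_gt0 k => th_gt0 f0_ge.
  apply: (Rmult_le_reg_l (theta k)) => //.
  rewrite (Rmult_comm (_ - _)) -Rmult_assoc Rinv_r ?Rmult_1_l; [lra | exact: Rgt_not_eq].
- apply: (Rle_cv_lim _ (Un_cv_const 0) (cv_y i)) => k.
  by have [/(_ i) []] := bounds k.
Qed.

Lemma outer_limit_g_le i : g i x <= 0.
Proof.
have cv_bound : Un_cv (fun k => ys k i + alpha k) 0.
  by rewrite -(Rplus_0_r 0) -{1}(outer_limit_y0 i); apply: CV_plus.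
apply: (lsc_le_cv_lim (g_lsc i) cv_x _ cv_bound) => k.
by have [/(_ i) [_ gs_le _] _] := bounds k; have := gs_ge k i (xs k); lra.
Qed.

Lemma epi_f_lim_outer_limit : epi (f_lim f0 g) (x, y, a).
Proof.
apply/epi_f_limP; split.
- exact: outer_limit_y0.
- exact: outer_limit_g_le.
- exact: outer_limit_f0_le.
Qed.

End OuterLimit.

Lemma f_lim_inner_limit n q (f0 : vec n -> R) (g : 'I_q -> vec n -> R)
    (theta alpha : nat -> R) (f0s : nat -> vec n -> R) (gs : nat -> 'I_q -> vec n -> R) :
  (forall k, 0 <= alpha k) -> Un_cv alpha 0 -> Un_cv (fun k => theta k * alpha k) 0 ->
  (forall k x, f0s k x <= f0 x + alpha k) -> (forall k i x, gs k i x <= g i x + alpha k) ->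
  forall p, epi (f_lim f0 g) p ->
  inner_limit (fun k => epi (f_nu (theta k) (f0s k) (gs k))) p.
Proof.
move=> alpha_ge0 alpha_cv0 theta_alpha_cv0 f0s_le gs_le [[x y] a].
move=> /epi_f_limP [y0 gx_le f0x_le].
exists 0%nat, (fun k => (x, fun _ => alpha k, a + alpha k + INR q * (theta k * alpha k))).
split=> [k _|]; first apply: epi_f_nu_const => //.
- by move=> i; have := gs_le k i x; have := gx_le i; lra.
- by have := f0s_le k x; lra.
split; [|split] => /=.
- by move=> i; apply: Un_cv_const.
- by move=> i; rewrite y0.
- rewrite [X in Un_cv _ X](_ : a = a + 0 + INR q * 0); last ring.
  by apply: CV_plus; [apply: CV_plus | apply: CV_mult] => //; apply: Un_cv_const.
Qed.

Theorem mainTheorem5 (n q : nat)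
  (f0 : vec n -> R) (g : 'I_q -> vec n -> R)
  (f0s : nat -> vec n -> R) (gs : nat -> 'I_q -> vec n -> R)
  (alpha theta : nat -> R)
  (Hf0 : seq_continuous f0)
  (Hg : forall i, lsc (g i))
  (Halpha : forall k, 0 <= alpha k)
  (Hf0s : forall k x, Rabs (f0s k x - f0 x) <= alpha k)
  (Hgs : forall k i x, Rabs (gs k i x - g i x) <= alpha k)
  (Htheta : forall k, 0 < theta k)
  (Htheta_inf : cv_infty theta)
  (Hthal : Un_cv (fun k => theta k * alpha k) 0) :
  epi_converges (fun k => f_nu (theta k) (f0s k) (gs k)) (f_lim f0 g).
Proof.
have alpha_cv0 := cv0_of_cv_infty_mul Halpha Htheta_inf Hthal.
have f0s_bounds k x := Rabs_sub_le_bounds (Hf0s k x).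
have gs_bounds k i x := Rabs_sub_le_bounds (Hgs k i x).
split.
- move=> [[x y] a] [N [ps [N_lt [epi_ps [cv_x [cv_y cv_a]]]]]].
  have epi_k k : epi (f_nu (theta (N k)) (f0s (N k)) (gs (N k)))
                     ((ps k).1.1, (ps k).1.2, (ps k).2).
    by case: (ps k) (epi_ps k) => [[]].
  apply: (epi_f_lim_outer_limit Hf0 Hg (fun k => Htheta (N k))
            (cv_infty_subseq N_lt Htheta_inf) (Un_cv_subseq N_lt alpha_cv0)
            _ _ epi_k cv_x cv_y cv_a).
  + by move=> k x'; have [] := f0s_bounds (N k) x'.
  + by move=> k i x'; have [] := gs_bounds (N k) i x'.
- apply: f_lim_inner_limit => //.
  + by move=> k x; have [] := f0s_bounds k x.
  + by move=> k i x; have [] := gs_bounds k i x.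
Qed.
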